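(* Let $F=(\langle a_\alpha,b_\alpha,F_\alpha\rangle)_{\alpha\in A}$ be an ordinal sum of t-subnorms which is a t-norm, $f:[0,1]\to[0,1]$ strictly increasing with $B_A^f\ne\emptyset$, $\{f_\beta\}_{\beta\in B_A^f}$ the decomposition set of $f$, $T(x,y)=f^{(-1)}(F(f(x),f(y)))$, and for $\beta\in B_A^f$ and $x,y\in[s_\beta,t_\beta]$, $T^\beta(x,y)=f_\beta^{(-1)}(F^\beta(f_\beta(x),f_\beta(y)))$ and $\underline T^\beta(x,y)=f_\beta^{(-1)}(\underline F^\beta(f_\beta(x),f_\beta(y)))$, where $\underline F^\beta(x,y)=F^\beta(x,y)$ for $(x,y)\in[a_\beta,b_\beta)^2$ and $\underline F^\beta(x,y)=\min\{x,y\}$ for $(x,y)\in[a_\beta,b_\beta]^2\setminus[a_\beta,b_\beta)^2$. Let $\beta\in B_A^f$. (i) If $F_\beta$ is a t-norm, then $T(x,y)=T^\beta(x,y)$ for all $x,y\in[s_\beta,t_\beta]$ with $(x,y)\ne(s_\beta,s_\beta)$. (ii) If $F_\beta$ is a proper t-subnorm, then: (a) if $f(t_\beta)\le b_\beta$, $T(x,y)=T^\beta(x,y)$ for all $x,y\in[s_\beta,t_\beta]$ with $(x,y)\ne(s_\beta,s_\beta)$; (b) if $f(t_\beta)>b_\beta$, $T(x,y)=\underline T^\beta(x,y)$ for all $x,y\in[s_\beta,t_\beta]$ with $(x,y)\ne(s_\beta,s_\beta)$.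
   Context: A t-norm is a commutative, associative map $[0,1]^2\to[0,1]$, non-decreasing in each variable, with neutral element $1$; a t-subnorm is commutative, associative, non-decreasing with $G(x,y)\le\min\{x,y\}$; proper means not a t-norm. For a non-decreasing $g:[p,q]\to[u,v]$, $g^{(-1)}(y)=\sup\{x\in[p,q]:g(x)<y\}$ with $\sup\emptyset=p$. Ordinal sum of t-subnorms: $A\ne\emptyset$ totally ordered, $(a_\alpha,b_\alpha)$ pairwise disjoint non-empty open subintervals of $[0,1]$, $F_\alpha$ t-subnorms, and $F(x,y)=a_\alpha+(b_\alpha-a_\alpha)F_\alpha(\frac{x-a_\alpha}{b_\alpha-a_\alpha},\frac{y-a_\alpha}{b_\alpha-a_\alpha})$ if $(x,y)\in(a_\alpha,b_\alpha]^2$, $\min\{x,y\}$ otherwise; $F$ is assumed to be a t-norm. $F^\alpha(x,y)=a_\alpha+(b_\alpha-a_\alpha)F_\alpha(\frac{x-a_\alpha}{b_\alpha-a_\alpha},\frac{y-a_\alpha}{b_\alpha-a_\alpha})$ for $x,y\in[a_\alpha,b_\alpha]$. $s_\alpha=\inf\{x\in[0,1]:f(x)\ge a_\alpha\}$, $t_\alpha=\sup\{x\in[0,1]:f(x)\le b_\alpha\}$ ($\inf\emptyset=1,\sup\emptyset=0$); $B_A^f=\{\beta\in A:s_\beta<t_\beta\}$. Decomposition set: $f_\beta:[s_\beta,t_\beta]\to[a_\beta,b_\beta]$ with $f_\beta=f$ on $(s_\beta,t_\beta)$, $f_\beta(s_\beta)=f(s_\beta)$ if $f(s_\beta)\ge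 a_\beta$ else $a_\beta$, $f_\beta(t_\beta)=f(t_\beta)$ if $f(t_\beta)\le b_\beta$ else $b_\beta$. *)

From HB Require Import structures.
From mathcomp Require Import all_boot all_order all_algebra.
From mathcomp Require Import boolp classical_sets reals.
Set Implicit Arguments. Unset Strict Implicit. Unset Printing Implicit Defensive.
Import Order.TTheory GRing.Theory Num.Theory.
Local Open Scope ring_scope.
Local Open Scope classical_set_scope.

Section Defs.
Variable R : realType.

Definition inI (x : R) : Prop := 0 <= x <= 1.

Definition is_tnorm (T : R -> R -> R) : Prop :=
  [/\ (forall x y, inI x -> inI y -> inI (T x y)),
      (forall x y, inI x -> inI y -> T x y = T y x),
      (forall x y z, inI x -> inI y -> inI z -> T x (T y z) = T (T x y) z),
      ((forall x x' y, inI x -> inI x' -> inI y -> x <= x' -> T x y <= T x' y) /\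
       (forall x y y', inI x -> inI y -> inI y' -> y <= y' -> T x y <= T x y')) &
      (forall x, inI x -> T x 1 = x /\ T 1 x = x)].

Definition is_tsubnorm (T : R -> R -> R) : Prop :=
  [/\ (forall x y, inI x -> inI y -> inI (T x y)),
      (forall x y, inI x -> inI y -> T x y = T y x),
      (forall x y z, inI x -> inI y -> inI z -> T x (T y z) = T (T x y) z),
      ((forall x x' y, inI x -> inI x' -> inI y -> x <= x' -> T x y <= T x' y) /\
       (forall x y y', inI x -> inI y -> inI y' -> y <= y' -> T x y <= T x y')) &
      (forall x y, inI x -> inI y -> T x y <= Num.min x y)].

Definition scaled (a b : R) (G : R -> R -> R) (x y : R) : R :=
  a + (b - a) * G ((x - a) / (b - a)) ((y - a) / (b - a)).

Definition ordinal_sum_data (A : Type) (a b : A -> R)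
    (Fa : A -> R -> R -> R) : Prop :=
  [/\ inhabited A,
      (forall al, 0 <= a al /\ a al < b al /\ b al <= 1),
      (forall al be, al <> be -> b al <= a be \/ b be <= a al) &
      (forall al, is_tsubnorm (Fa al))].

Definition is_ordinal_sum (A : Type) (a b : A -> R)
    (Fa : A -> R -> R -> R) (F : R -> R -> R) : Prop :=
  ordinal_sum_data a b Fa /\
  forall x y, inI x -> inI y ->
    ((forall al, a al < x <= b al -> a al < y <= b al ->
        F x y = scaled (a al) (b al) (Fa al) x y) /\
     ((~ exists al, a al < x <= b al /\ a al < y <= b al) ->
        F x y = Num.min x y)).

Definition pseudo_inv (p q : R) (g : R -> R) (y : R) : R :=
  let S := [set x | p <= x <= q /\ g x < y] in
  if pselect (S = set0) then p else sup S.

Definition s_of (f : R -> R) (a : R) : R :=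
  let S := [set x | inI x /\ a <= f x] in
  if pselect (S = set0) then 1 else inf S.

Definition t_of (f : R -> R) (b : R) : R :=
  let S := [set x | inI x /\ f x <= b] in
  if pselect (S = set0) then 0 else sup S.

(* f_beta : [s_beta, t_beta] -> [a_beta, b_beta]  (values outside irrelevant) *)
Definition f_dec (f : R -> R) (a b : R) (x : R) : R :=
  let s := s_of f a in let t := t_of f b in
  if x == s then (if a <= f s then f s else a)
  else if x == t then (if f t <= b then f t else b)
  else f x.

Definition under_scaled (a b : R) (G : R -> R -> R) (x y : R) : R :=
  if (x < b) && (y < b) then scaled a b G x y else Num.min x y.

Definition Tgen (f : R -> R) (F : R -> R -> R) (x y : R) : R :=
  pseudo_inv 0 1 f (F (f x) (f y)).

Definition Tbeta (f : R -> R) (a b : R) (G : R -> R -> R) (x y : R) : R :=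
  let fb := f_dec f a b in
  pseudo_inv (s_of f a) (t_of f b) fb (scaled a b G (fb x) (fb y)).

Definition Tbeta_under (f : R -> R) (a b : R) (G : R -> R -> R) (x y : R) : R :=
  let fb := f_dec f a b in
  pseudo_inv (s_of f a) (t_of f b) fb (under_scaled a b G (fb x) (fb y)).

End Defs.

(* Both T(x, y) and T^beta(x, y) are pseudo-inverses, i.e. suprema of sublevel
   sets: of f on [0,1] and of f_beta, the clamp of f to [a_beta, b_beta], on
   [s_beta, t_beta].  Below s_beta the values of f stay under a_beta and above
   t_beta they exceed b_beta, so at any level in [a_beta, b_beta] the two
   suprema coincide; so they do at the level f(s_beta) < a_beta (both are
   s_beta) and at levels in [b_beta, f(t_beta)] when f(t_beta) > b_beta (both
   are t_beta).  It remains to match the levels: for x, y in [s_beta, t_beta]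
   the ordinal sum is F^beta inside the beta-square and the minimum across the
   endpoints a_beta and b_beta, exactly where f_beta clamps.  On the line
   through b_beta the minimum agrees with F^beta when F_beta is a t-norm; for a
   proper t-subnorm it agrees only with the modified underline-F^beta, unless
   f(t_beta) <= b_beta and f_beta never clamps at the top. *)

From HB Require Import structures.
From mathcomp Require Import all_boot all_order all_algebra.
From mathcomp Require Import boolp classical_sets reals.
Set Implicit Arguments.
Unset Strict Implicit.
Unset Printing Implicit Defensive.
Import Order.TTheory GRing.Theory Num.Theory.
Local Open Scope ring_scope.
Local Open Scope classical_set_scope.

Section PseudoInverse.
Variable R : realType.

Lemma pseudo_inv_le (p q : R) (g : R -> R) (y m : R) :
  pseudo_inv p q g y <= m <->
  p <= m /\ forall x, p <= x <= q -> g x < y -> x <= m.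
Proof.
rewrite /pseudo_inv; set S := [set x | _]; case: pselect => [S0|/eqP/set0P Sn] /=.
  split=> [pm|[] //]; split=> // x px gx.
  by have : S x by []; rewrite S0.
have Sub : has_ubound S by exists q => x [/andP[]].
split=> [supm|[pm Sm]]; last by apply: ge_sup Sn _ => x [px gx]; exact: Sm.
have [x0 Sx0] := Sn; have [/andP[px0 _] _] := Sx0; split.
  exact: le_trans px0 (le_trans (ub_le_sup Sub Sx0) supm).
by move=> x px gx; exact: le_trans (ub_le_sup Sub (conj px gx)) supm.
Qed.

(* The sublevel set of [g] on [0,1] is [0,s), possibly s, and the sublevel set
   of [gb] on [s,t]; so both have the same supremum. *)
Lemma pseudo_inv_restrict (g gb : R -> R) (s t c c' : R) :
  0 <= s -> s <= t -> t <= 1 ->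
  (forall z, 0 <= z < s -> g z < c') ->
  (forall z, 0 <= z <= 1 -> g z < c' -> z <= t) ->
  (forall z, s < z <= t -> (g z < c') = (gb z < c)) ->
  (gb s < c -> g s < c') ->
  pseudo_inv 0 1 g c' = pseudo_inv s t gb c.
Proof.
move=> s0 st t1 below_s bound_t agree at_s.
suff E m : pseudo_inv 0 1 g c' <= m <-> pseudo_inv s t gb c <= m.
  by apply/le_anti/andP; split; [apply/(E _).2 | apply/(E _).1].
rewrite !pseudo_inv_le; split=> [[m0 ub0]|[sm ubt]].
  have sm : s <= m.
    rewrite leNgt; apply/negP => ms; have [mlt ltz] := midf_lt ms.
    have m0' : 0 <= (m + s) / 2 by exact: le_trans m0 (ltW mlt).
    suff : (m + s) / 2 <= m by rewrite leNgt mlt.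
    apply: ub0 (below_s _ _); last by rewrite m0' ltz.
    by rewrite m0' (le_trans (ltW ltz)) ?(le_trans st).
  split=> // z /andP[sz zt] gz; have [ezs|nzs] := eqVneq z s.
    by rewrite ezs in gz *; apply: ub0 (at_s gz); rewrite s0 (le_trans st).
  have lt_sz : s < z by rewrite lt_neqAle eq_sym nzs.
  by apply: ub0; rewrite ?agree ?lt_sz ?zt // (le_trans s0) ?sz ?(le_trans zt).
split=> [|z /andP[z0 z1] gz]; first exact: le_trans s0 sm.
have [zs|sz] := leP z s; first exact: le_trans zs sm.
have zt : z <= t by apply: bound_t; rewrite ?z0.
by apply: ubt; rewrite ?(ltW sz) ?zt // -agree ?sz.
Qed.

End PseudoInverse.

Section Endpoints.
Variables (R : realType) (f : R -> R).

Lemma s_of_inI (a : R) : inI (s_of f a).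
Proof.
rewrite /s_of; set S := [set x | _].
case: pselect => [_|/eqP/set0P [z Sz]] /=; first by rewrite /inI lexx ler01.
have lb0 : lbound S 0 by move=> x [/andP[]].
have /andP[_ z1] : inI z by case: Sz.
rewrite /inI lb_le_inf //=; last by exists z.
exact: le_trans (@ge_inf _ S (ex_intro _ 0 lb0) z Sz) z1.
Qed.

Lemma t_of_inI (b : R) : inI (t_of f b).
Proof.
rewrite /t_of; set S := [set x | _].
case: pselect => [_|/eqP/set0P [z Sz]] /=; first by rewrite /inI lexx ler01.
have ub1 : ubound S 1 by move=> x [/andP[]].
have /andP[z0 _] : inI z by case: Sz.
rewrite /inI ge_sup // ?andbT; last by exists z.
exact: le_trans z0 (@ub_le_sup _ S (ex_intro _ 1 ub1) z Sz).
Qed.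

Lemma s_of_ge0 a : 0 <= s_of f a.
Proof. by case/andP: (s_of_inI a). Qed.

Lemma t_of_le1 b : t_of f b <= 1.
Proof. by case/andP: (t_of_inI b). Qed.

Lemma f_below_s_of a z : inI z -> z < s_of f a -> f z < a.
Proof.
move=> Iz; apply: contraTT; rewrite -!leNgt => afz.
rewrite /s_of; case: pselect => [S0|_] /=.
  by have : [set x | inI x /\ a <= f x] z by []; rewrite S0.
by apply: ge_inf => //; exists 0 => x [/andP[]].
Qed.

Lemma f_above_t_of b z : inI z -> t_of f b < z -> b < f z.
Proof.
move=> Iz; apply: contraTT; rewrite -!leNgt => fzb.
rewrite /t_of; case: pselect => [S0|_] /=.
  by have : [set x | inI x /\ f x <= b] z by []; rewrite S0.
by apply: ub_le_sup => //; exists 1 => x [/andP[]].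
Qed.

Hypothesis f_mono : forall x y, inI x -> inI y -> x < y -> f x < f y.

Lemma f_above_s_of a z : inI z -> s_of f a < z -> a < f z.
Proof.
move=> Iz; rewrite /s_of; case: pselect => [_|/eqP/set0P Sn] /=.
  by case/andP: Iz => _ z1 /lt_le_trans/(_ z1); rewrite ltxx.
case/(inf_lt Sn) => x [Ix afx] xz; exact: le_lt_trans afx (f_mono Ix Iz xz).
Qed.

Lemma f_below_t_of b z : inI z -> z < t_of f b -> f z < b.
Proof.
move=> Iz; rewrite /t_of; case: pselect => [_|/eqP/set0P Sn] /=.
  by case/andP: Iz => z0 _ /(le_lt_trans z0); rewrite ltxx.
case/(sup_gt Sn) => x [Ix fxb] zx; exact: lt_le_trans (f_mono Iz Ix zx) fxb.
Qed.

End Endpoints.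

Section Scaled.
Variables (R : realType) (a b : R) (G : R -> R -> R).
Hypothesis ab : a < b.

Lemma rescale_inI u : a <= u <= b -> inI ((u - a) / (b - a)).
Proof.
case/andP=> au ub.
by rewrite /inI divr_ge0 ?subr_ge0 ?(ltW ab) //= ler_pdivrMr ?subr_gt0 // mul1r lerD2r.
Qed.

Lemma scaled_bR u : is_tnorm G -> a <= u <= b -> scaled a b G u b = u.
Proof.
case=> _ _ _ _ G1 hu; have ba : b - a != 0 by rewrite subr_eq0 gt_eqF.
by rewrite /scaled divff // (G1 _ (rescale_inI hu)).1 mulrC divfK // addrC subrK.
Qed.

Hypothesis G_sub : is_tsubnorm G.

Lemma scaled_range u v : a <= u <= b -> a <= v <= b -> a <= scaled a b G u v <= b.
Proof.
case: G_sub => GI _ _ _ _ hu hv; have ba : 0 < b - a by rewrite subr_gt0.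
have /andP[g0 g1] := GI _ _ (rescale_inI hu) (rescale_inI hv).
by rewrite /scaled lerDl mulr_ge0 ?(ltW ba) //= -lerBrDl ler_piMr // ltW.
Qed.

Lemma scaledC u v : a <= u <= b -> a <= v <= b -> scaled a b G u v = scaled a b G v u.
Proof.
by case: G_sub => _ GC _ _ _ hu hv; rewrite /scaled GC //; exact: rescale_inI.
Qed.

Lemma scaled_aL v : a <= v <= b -> scaled a b G a v = a.
Proof.
case: G_sub => GI _ _ _ Gmin hv.
have I0 : inI ((a - a) / (b - a)) by rewrite subrr mul0r /inI lexx ler01.
rewrite /scaled; suff -> : G ((a - a) / (b - a)) ((v - a) / (b - a)) = 0.
  by rewrite mulr0 addr0.
apply/le_anti; have /andP[-> _] := GI _ _ I0 (rescale_inI hv); rewrite andbT.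
by apply: le_trans (Gmin _ _ I0 (rescale_inI hv)) _; rewrite subrr mul0r ge_min lexx.
Qed.

Lemma under_scaled_scaled u v : u < b -> v < b ->
  under_scaled a b G u v = scaled a b G u v.
Proof. by rewrite /under_scaled => -> ->. Qed.

Lemma under_scaled_bR u : u <= b -> under_scaled a b G u b = u.
Proof. by move=> ub; rewrite /under_scaled ltxx andbF min_l. Qed.

Lemma under_scaled_range u v : a <= u <= b -> a <= v <= b ->
  a <= under_scaled a b G u v <= b.
Proof.
move=> hu hv; rewrite /under_scaled; case: ifP => _; first exact: scaled_range.
by case/andP: hu hv => au ub /andP[av vb]; rewrite le_min au av ge_min ub.
Qed.

Lemma under_scaledC u v : a <= u <= b -> a <= v <= b ->
  under_scaled a b G u v = under_scaled a b G v u.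
Proof. by move=> hu hv; rewrite /under_scaled andbC scaledC // minC. Qed.

Lemma under_scaled_aL v : a <= v <= b -> under_scaled a b G a v = a.
Proof.
by move=> hv; rewrite /under_scaled scaled_aL // min_l; [case: ifP | case/andP: hv].
Qed.

End Scaled.

Section OrdinalSum.
Variables (R : realType) (A : Type) (a b : A -> R) (Fa : A -> R -> R -> R).
Variable F : R -> R -> R.
Hypothesis F_os : is_ordinal_sum a b Fa F.

Lemma ordinal_sum_bounds al : 0 <= a al /\ a al < b al /\ b al <= 1.
Proof. by case: F_os => -[]. Qed.

Lemma ordinal_sum_tsubnorm al : is_tsubnorm (Fa al).
Proof. by case: F_os => -[]. Qed.

Lemma ordinal_sum_scaled be u v : a be < u <= b be -> a be < v <= b be ->
  F u v = scaled (a be) (b be) (Fa be) u v.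
Proof.
have [a0 [_ b1]] := ordinal_sum_bounds be.
have inI_of w : a be < w <= b be -> inI w.
  by case/andP=> /ltW aw wb; rewrite /inI (le_trans a0 aw) (le_trans wb b1).
by move=> hu hv; case: F_os => _ /(_ u v (inI_of u hu) (inI_of v hv)) [/(_ be hu hv)].
Qed.

Definition outside_summands (c : R) : Prop := forall al, c <= a al \/ b al <= c.

Lemma outside_summands_a be : outside_summands (a be).
Proof.
move=> al; have [-> |nal] := pselect (al = be); first by left.
have [_ [ab _]] := ordinal_sum_bounds be.
case: F_os => -[_ _ disj _] _; case: (disj _ _ nal) => h; first by right.
by left; exact: le_trans (ltW ab) h.
Qed.

Lemma outside_summands_b be : outside_summands (b be).
Proof.
move=> al; have [-> |nal] := pselect (al = be); first by right.
have [_ [ab _]] := ordinal_sum_bounds be.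
case: F_os => -[_ _ disj _] _; case: (disj _ _ nal) => h; last by left.
by right; exact: le_trans h (ltW ab).
Qed.

Lemma ordinal_sum_split c u v : outside_summands c -> inI u -> inI v ->
  u <= c < v -> F u v = u.
Proof.
move=> out Iu Iv /andP[uc cv]; case: F_os => _ /(_ u v Iu Iv) [_ ->].
  by rewrite min_l // (le_trans uc (ltW cv)).
move=> [al [/andP[au _] /andP[_ vb]]]; case: (out al) => h.
  by move: (lt_le_trans au (le_trans uc h)); rewrite ltxx.
by move: (lt_le_trans cv (le_trans vb h)); rewrite ltxx.
Qed.

Lemma ordinal_sum_ge c u v : outside_summands c -> inI u -> inI v ->
  c < u -> c < v -> c <= F u v.
Proof.
move=> out Iu Iv cu cv; case: F_os => _ /(_ u v Iu Iv) [Fin Fmin].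
have [[al [hu hv]]|nin] := pselect (exists al, a al < u <= b al /\ a al < v <= b al).
  have cal : c <= a al.
    case: (out al) => // h; case/andP: hu => _ ub.
    by move: (lt_le_trans cu (le_trans ub h)); rewrite ltxx.
  have [_ [ab _]] := ordinal_sum_bounds al.
  rewrite (Fin _ hu hv); apply: le_trans cal _.
  have closed w : a al < w <= b al -> a al <= w <= b al by case/andP=> /ltW -> ->.
  by case/andP: (scaled_range ab (ordinal_sum_tsubnorm al) (closed u hu) (closed v hv)).
by rewrite (Fmin nin) le_min !ltW.
Qed.

End OrdinalSum.

Section Decomposition.
Variables (R : realType) (f : R -> R) (a b : R).
Hypothesis f_mono : forall x y, inI x -> inI y -> x < y -> f x < f y.
Hypotheses (ab : a < b) (st : s_of f a < t_of f b).

Local Notation s := (s_of f a).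
Local Notation t := (t_of f b).
Local Notation fb := (f_dec f a b).
(* The points where [f_dec] clamps [f] to [a] and to [b]. *)
Local Notation low z := (z = s /\ f s < a).
Local Notation high z := (z = t /\ b < f t).

Lemma inI_of_st z : s <= z <= t -> inI z.
Proof.
case/andP: (s_of_inI f a) (t_of_inI f b) => s0 _ /andP[_ t1] /andP[sz zt].
by rewrite /inI (le_trans s0 sz) (le_trans zt t1).
Qed.

Lemma inI_below_s z : 0 <= z < s -> inI z.
Proof.
by case/andP=> z0 zs; rewrite /inI z0 (le_trans (ltW (lt_trans zs st)) (t_of_le1 f b)).
Qed.

Lemma f_s_lt_b : f s < b.
Proof. exact (f_below_t_of f_mono (s_of_inI f a) st). Qed.

Lemma f_dec_s : fb s = if a <= f s then f s else a.
Proof. by rewrite /f_dec eqxx. Qed.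

Lemma f_dec_t : fb t = if f t <= b then f t else b.
Proof. by rewrite /f_dec gt_eqF // eqxx. Qed.

Lemma f_dec_interior z : s < z -> z < t -> fb z = f z.
Proof. by move=> sz zt; rewrite /f_dec gt_eqF // lt_eqF. Qed.

Lemma f_dec_regular z : s <= z <= t ->
  ~ low z -> ~ high z -> fb z = f z /\ a <= f z <= b.
Proof.
move=> hz nlow nhigh; have Iz := inI_of_st hz; case/andP: hz => sz zt.
have [ezs|nzs] := eqVneq z s.
  rewrite ezs f_dec_s (ltW f_s_lt_b) andbT; case: leP => // fsa.
  by case: nlow.
have {}sz : s < z by rewrite lt_neqAle eq_sym nzs.
have az := f_above_s_of f_mono Iz sz.
have [ezt|nzt] := eqVneq z t.
  rewrite ezt f_dec_t; rewrite ezt in az; rewrite (ltW az); case: leP => // bft.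
  by case: nhigh.
have {}zt : z < t by rewrite lt_neqAle nzt.
by rewrite f_dec_interior // (ltW az) (ltW (f_below_t_of f_mono Iz zt)).
Qed.

Lemma f_dec_range z : s <= z <= t -> a <= fb z <= b.
Proof.
move=> hz; have [[-> fsa]|nlow] := pselect (low z).
  by rewrite f_dec_s ifN -?ltNge // lexx ltW.
have [[-> bft]|nhigh] := pselect (high z).
  by rewrite f_dec_t ifN -?ltNge // lexx ltW.
by have [-> ->] := f_dec_regular hz nlow nhigh.
Qed.

Lemma pseudo_inv_dec_mid c : a <= c <= b ->
  pseudo_inv 0 1 f c = pseudo_inv s t fb c.
Proof.
case/andP=> ac cb; apply: pseudo_inv_restrict (s_of_ge0 f a) (ltW st) (t_of_le1 f b) _ _ _ _.
- move=> z hz; apply: lt_le_trans (f_below_s_of (inI_below_s hz) _) ac.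
  by case/andP: hz.
- move=> z Iz fzc; rewrite leNgt; apply/negP => /(f_above_t_of Iz) bfz.
  by move: (lt_trans (le_lt_trans cb bfz) fzc); rewrite ltxx.
- move=> z /andP[sz]; rewrite le_eqVlt => /predU1P[->|zt]; last by rewrite f_dec_interior.
  rewrite f_dec_t; case: (leP (f t) b) => // bft.
  by rewrite !ltNge cb (le_trans cb (ltW bft)).
- by rewrite f_dec_s; case: (leP a (f s)) => // fsa _; exact: lt_le_trans fsa ac.
Qed.

Lemma pseudo_inv_dec_low : f s < a -> pseudo_inv 0 1 f (f s) = pseudo_inv s t fb a.
Proof.
move=> fsa; have Is := s_of_inI f a.
apply: pseudo_inv_restrict (s_of_ge0 f a) (ltW st) (t_of_le1 f b) _ _ _ _.
- by move=> z hz; apply: f_mono (inI_below_s hz) Is _; case/andP: hz.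
- move=> z Iz fzs; apply: le_trans (ltW st); rewrite leNgt; apply/negP => sz.
  by move: (lt_trans fzs (f_mono Is Iz sz)); rewrite ltxx.
- move=> z /andP[sz zt]; have hz : s <= z <= t by rewrite (ltW sz) zt.
  have /andP[afz _] := f_dec_range hz.
  by rewrite !ltNge afz (ltW (f_mono Is (inI_of_st hz) sz)).
- by rewrite f_dec_s ifN -?ltNge // ltxx.
Qed.

Lemma pseudo_inv_dec_high c : b < f t -> b <= c <= f t ->
  pseudo_inv 0 1 f c = pseudo_inv s t fb b.
Proof.
move=> bft /andP[bc cft]; have It := t_of_inI f b.
apply: pseudo_inv_restrict (s_of_ge0 f a) (ltW st) (t_of_le1 f b) _ _ _ _.
- move=> z hz; apply: lt_le_trans bc.
  by apply: lt_trans (f_below_s_of (inI_below_s hz) _) ab; case/andP: hz.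
- move=> z Iz fzc; rewrite leNgt; apply/negP => tz.
  by move: (lt_trans (lt_le_trans fzc cft) (f_mono It Iz tz)); rewrite ltxx.
- move=> z /andP[sz]; rewrite le_eqVlt => /predU1P[->|zt].
    by rewrite f_dec_t leNgt bft ltxx ltNge cft.
  have hz : s <= z <= t by rewrite !ltW.
  have fzb := f_below_t_of f_mono (inI_of_st hz) zt.
  by rewrite f_dec_interior // fzb (lt_le_trans fzb bc).
- by move=> _; exact: lt_le_trans f_s_lt_b bc.
Qed.

End Decomposition.

Lemma tnorm_le_l (R : realType) (T : R -> R -> R) u v :
  is_tnorm T -> inI u -> inI v -> T u v <= u.
Proof.
case=> _ _ _ [_ Tmono] T1 Iu /[dup] Iv /andP[_ v1].
by rewrite -{2}(T1 u Iu).1 Tmono // /inI ler01 lexx.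
Qed.

Section Representation.
Variables (R : realType) (A : Type) (a b : A -> R) (Fa : A -> R -> R -> R).
Variables (F : R -> R -> R) (f : R -> R) (be : A).
Hypotheses (F_os : is_ordinal_sum a b Fa F) (F_tnorm : is_tnorm F).
Hypothesis f_range : forall x, inI x -> inI (f x).
Hypothesis f_mono : forall x y, inI x -> inI y -> x < y -> f x < f y.
Hypothesis st : s_of f (a be) < t_of f (b be).

Local Notation s := (s_of f (a be)).
Local Notation t := (t_of f (b be)).
Local Notation fb := (f_dec f (a be) (b be)).
Local Notation inAB u := (a be <= u <= b be).
Local Notation low z := (z = s /\ f s < a be).
Local Notation high z := (z = t /\ b be < f t).

Let ab : a be < b be. Proof. by have [_ []] := ordinal_sum_bounds F_os be. Qed.

Let fI z : s <= z <= t -> inI (f z).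
Proof. by move=> /inI_of_st; apply: f_range. Qed.

Let fb_range z : s <= z <= t -> inAB (fb z).
Proof. exact: f_dec_range. Qed.

Let fb_regular z : s <= z <= t -> ~ low z -> ~ high z -> fb z = f z /\ inAB (f z).
Proof. exact: f_dec_regular. Qed.

Section Combination.
(* [C] stands for F^beta or its variant [under_scaled]; only these properties
   of it are used. *)
Variable C : R -> R -> R.
Hypothesis C_range : forall u v, inAB u -> inAB v -> inAB (C u v).
Hypothesis CC : forall u v, inAB u -> inAB v -> C u v = C v u.
Hypothesis C_aL : forall v, inAB v -> C (a be) v = a be.
Hypothesis C_scaled : forall u v, a be < u <= b be -> a be < v <= b be ->
  (b be < f t -> u < b be /\ v < b be) -> C u v = scaled (a be) (b be) (Fa be) u v.
Hypothesis C_bR : b be < f t -> forall u, inAB u -> C u (b be) = u.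

Local Notation T_C x y := (pseudo_inv s t fb (C (fb x) (fb y))).

Lemma Tgen_low y : f s < a be -> s < y <= t -> Tgen f F s y = T_C s y.
Proof.
move=> fsa /andP[sy yt]; have hy : s <= y <= t by rewrite (ltW sy) yt.
have hs : s <= s <= t by rewrite lexx ltW.
rewrite f_dec_s ifN -?ltNge // (C_aL (fb_range hy)) /Tgen.
rewrite (ordinal_sum_split F_os (outside_summands_a F_os be) (fI hs) (fI hy)).
  exact: pseudo_inv_dec_low f_mono ab st fsa.
by rewrite (ltW fsa) (f_above_s_of f_mono (inI_of_st hy) sy).
Qed.

Lemma Tgen_high x : b be < f t -> s <= x <= t -> ~ low x -> Tgen f F x t = T_C x t.
Proof.
move=> bft hx nlow; have ht : s <= t <= t by rewrite lexx ltW.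
rewrite f_dec_t // ifN -?ltNge // (C_bR bft (fb_range hx)).
have [->|xt] := eqVneq x t.
  rewrite f_dec_t // ifN -?ltNge // /Tgen.
  apply: (pseudo_inv_dec_high f_mono ab st bft).
  rewrite (tnorm_le_l F_tnorm (fI ht) (fI ht)) andbT.
  exact (ordinal_sum_ge F_os (outside_summands_b F_os be) (fI ht) (fI ht) bft bft).
have [fbx /andP[afx _]] : fb x = f x /\ inAB (f x).
  by apply: fb_regular => // -[e _]; move: xt; rewrite e eqxx.
have xlt : x < t by rewrite lt_neqAle xt; case/andP: hx.
have fxb : f x < b be := f_below_t_of f_mono (inI_of_st hx) xlt.
rewrite fbx /Tgen (ordinal_sum_split F_os (outside_summands_b F_os be) (fI hx) (fI ht)).
  by apply: (pseudo_inv_dec_mid st); rewrite afx ltW.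
by rewrite (ltW fxb) bft.
Qed.

Lemma Tgen_regular x y : x <= y -> s <= x <= t -> s < y <= t ->
  ~ low x -> ~ high y -> Tgen f F x y = T_C x y.
Proof.
move=> xy hx /andP[sy yt] nlow nhigh; have hy : s <= y <= t by rewrite (ltW sy) yt.
have ylt : b be < f t -> y < t.
  by move=> bft; rewrite lt_neqAle yt andbT; apply/eqP => ey; apply: nhigh.
have [fbx /andP[afx fxb]] : fb x = f x /\ inAB (f x).
  apply: fb_regular => // -[xt bft]; move: (le_lt_trans xy (ylt bft)).
  by rewrite xt ltxx.
have [fby /andP[_ fyb]] : fb y = f y /\ inAB (f y).
  by apply: fb_regular => // -[ys _]; move: sy; rewrite ys ltxx.
have fya : a be < f y := f_above_s_of f_mono (inI_of_st hy) sy.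
rewrite fbx fby /Tgen; have [eax|ltax] := eqVneq (a be) (f x).
  rewrite (ordinal_sum_split F_os (outside_summands_a F_os be) (fI hx) (fI hy)).
    by rewrite -eax C_aL; [apply: (pseudo_inv_dec_mid st); rewrite lexx ltW | rewrite ltW].
  by rewrite -eax lexx fya.
have ax : a be < f x <= b be by rewrite lt_neqAle ltax afx fxb.
have ay : a be < f y <= b be by rewrite fya fyb.
rewrite (ordinal_sum_scaled F_os ax ay) -C_scaled //.
  by apply: (pseudo_inv_dec_mid st); apply: C_range; rewrite ?afx ?fxb ?fyb ?ltW.
move=> /ylt yt'; have xt := le_lt_trans xy yt'.
by split; [exact: (f_below_t_of f_mono (inI_of_st hx) xt)
          | exact: (f_below_t_of f_mono (inI_of_st hy) yt')].
Qed.

Lemma Tgen_eq_pseudo_inv_dec x y : s <= x <= t -> s <= y <= t -> (x, y) <> (s, s) ->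
  Tgen f F x y = T_C x y.
Proof.
wlog xy : x y / x <= y => [W hx hy nxy|hx hy nxy].
  have [/W|/ltW yx] := leP x y; first exact.
  have [_ FC _ _ _] := F_tnorm.
  rewrite /Tgen (FC _ _ (fI hx) (fI hy)) (CC (fb_range hx) (fb_range hy)).
  by apply: W => // -[ys xs]; apply: nxy; rewrite xs ys.
have sy : s < y <= t.
  case/andP: hy => sy ->; rewrite andbT lt_neqAle sy andbT; apply/eqP => ys.
  have xs : x = s by apply/le_anti; rewrite ys xy -ys; case/andP: hx.
  by apply: nxy; rewrite xs ys.
have [[-> fsa]|nlow] := pselect (low x); first exact: Tgen_low.
have [[-> bft]|nhigh] := pselect (high y); first exact: Tgen_high.
exact: Tgen_regular.
Qed.

End Combination.

Lemma Tgen_eq_Tbeta x y : is_tnorm (Fa be) \/ f t <= b be ->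
  s <= x <= t -> s <= y <= t -> (x, y) <> (s, s) ->
  Tgen f F x y = Tbeta f (a be) (b be) (Fa be) x y.
Proof.
move=> top; have G_sub := ordinal_sum_tsubnorm F_os be.
apply: Tgen_eq_pseudo_inv_dec => [u v|u v|v|//|bft u hu].
- exact: scaled_range.
- exact: scaledC.
- exact: scaled_aL.
- case: top => [G_tnorm|ftb]; first exact: scaled_bR.
  by move: (lt_le_trans bft ftb); rewrite ltxx.
Qed.

Lemma Tgen_eq_Tbeta_under x y : b be < f t ->
  s <= x <= t -> s <= y <= t -> (x, y) <> (s, s) ->
  Tgen f F x y = Tbeta_under f (a be) (b be) (Fa be) x y.
Proof.
move=> bft; have G_sub := ordinal_sum_tsubnorm F_os be.
apply: Tgen_eq_pseudo_inv_dec => [u v|u v|v|u v _ _ /(_ bft) []|_ u /andP[_]].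
- exact: under_scaled_range.
- exact: under_scaledC.
- exact: under_scaled_aL.
- exact: under_scaled_scaled.
- exact: under_scaled_bR.
Qed.

End Representation.

Theorem proposition5p2 (R : realType) (d : Order.disp_t) (A : orderType d)
    (a b : A -> R) (Fa : A -> R -> R -> R) (F : R -> R -> R) (f : R -> R)
    (beta : A) :
  is_ordinal_sum a b Fa F ->
  is_tnorm F ->
  (forall x, inI x -> inI (f x)) ->
  (forall x y, inI x -> inI y -> x < y -> f x < f y) ->
  s_of f (a beta) < t_of f (b beta) ->
  let s := s_of f (a beta) in
  let t := t_of f (b beta) in
  let inST := fun x => s <= x <= t in
  (is_tnorm (Fa beta) ->
     forall x y, inST x -> inST y -> (x, y) <> (s, s) ->
       Tgen f F x y = Tbeta f (a beta) (b beta) (Fa beta) x y) /\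
  (~ is_tnorm (Fa beta) ->
     (f t <= b beta ->
        forall x y, inST x -> inST y -> (x, y) <> (s, s) ->
          Tgen f F x y = Tbeta f (a beta) (b beta) (Fa beta) x y) /\
     (b beta < f t ->
        forall x y, inST x -> inST y -> (x, y) <> (s, s) ->
          Tgen f F x y = Tbeta_under f (a beta) (b beta) (Fa beta) x y)).
Proof.
move=> F_os F_tnorm f_range f_mono st s t inST.
split=> [G_tnorm x y|_]; first exact: Tgen_eq_Tbeta (or_introl G_tnorm).
split=> [ftb x y|bft x y]; first exact: Tgen_eq_Tbeta (or_intror ftb).
exact: Tgen_eq_Tbeta_under.
Qed.
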